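(* There exists an infinite set $A\subseteq \mathbb{R}^{2}$ with the following two properties: (1) for every positive integer $n$ and every subset $P\subseteq A$ consisting of $n$ points, there exists a subset $P'\subseteq P$ with $|P'|\ge n/2$ such that no three points of $P'$ are collinear; (2) there is no partition $A = A_1\cup\cdots\cup A_m$ of $A$ into finitely many sets such that, for each $i$, no three points of $A_i$ are collinear. *)

From Stdlib Require Import Reals List.
Import ListNotations.
Open Scope R_scope.

Definition point := (R * R)%type.

Definition collinear (p q r : point) : Prop :=
  (fst q - fst p) * (snd r - snd p) - (snd q - snd p) * (fst r - fst p) = 0.

Definition no_three_collinear (S : point -> Prop) : Prop :=
  forall p q r, S p -> S q -> S r -> p <> q -> q <> r -> p <> r ->
    ~ collinear p q r.

Definition infinite_set (S : point -> Prop) : Prop :=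
  forall l : list point, exists x, S x /\ ~ In x l.

From Stdlib Require Import Reals List Lia Lra Psatz Classical.
Open Scope R_scope.

(* The set is A = { phi (x i) (x j) : i < j } with phi u v = (u + v, u^2 + uv + v^2) and
   x_(n+1) = 20 x_n^2.  Three points of A are collinear exactly when their index pairs form
   a triangle {i, j}, {j, k}, {i, k}: for any other configuration the collinearity
   determinant is dominated by a nonzero integer multiple of a power of the largest x
   involved.  Property (2) is then the infinite Ramsey theorem for triangles, and property
   (1) holds because every finite graph has a bipartite subgraph with at least half of its
   edges (place the vertices one by one on the side that cuts more of their back edges),
   and a bipartite graph has no triangle. *)

(* For every w, phi u v lies on the line y = (u + v + w) s - (uv + vw + wu). *)
Definition phi (u v : R) : point := (u + v, u * u + u * v + v * v).

Lemma collinear_swap12 p q r : collinear p q r -> collinear q p r.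
Proof. unfold collinear; intros H; lra. Qed.

Lemma collinear_swap23 p q r : collinear p q r -> collinear p r q.
Proof. unfold collinear; intros H; lra. Qed.

Lemma phi_triangle_collinear a b c : collinear (phi a b) (phi b c) (phi a c).
Proof. unfold collinear, phi; simpl; ring. Qed.

Lemma phi_common_not_collinear a b c F : a <> b -> a <> c -> b <> c ->
  ~ collinear (phi a F) (phi b F) (phi c F).
Proof.
  intros hab hac hbc. unfold collinear, phi; simpl.
  replace (_ - _) with ((b - a) * (c - a) * (c - b)) by ring.
  repeat apply Rmult_integral_contrapositive_currified; lra.
Qed.

Lemma dominant_term_neq0 u v T : 1 <= Rabs u -> - T < v < T -> u * T + v <> 0.
Proof. intros Hu Hv; unfold Rabs in Hu; destruct (Rcase_abs u); nra. Qed.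

Lemma mul_interval u v U V : - U <= u <= U -> - V <= v <= V -> - (U * V) <= u * v <= U * V.
Proof. intros; split; nra. Qed.

Section LargeTop.

Variables M F : R.
Hypothesis M_ge1 : 1 <= M.
Hypothesis F_large : 20 * (M * M) <= F.

Let mul_bounds u v : 1 <= u <= M -> 1 <= v <= M -> 1 <= u * v <= M * M.
Proof. intros; split; nra. Qed.

Lemma phi_two_top_not_collinear a b d e :
  1 <= a <= M -> 1 <= b <= M -> 1 <= d <= M -> 1 <= e <= M -> d <> e ->
  1 <= Rabs (d + e - a - b) ->
  ~ collinear (phi a b) (phi d F) (phi e F).
Proof.
  intros ha hb hd he hde hsep. unfold collinear, phi; simpl.
  replace (_ - _) with ((e - d) * ((d + e - a - b) * F
                          + (d * e + a * a + a * b + b * b - (a + b) * (d + e)))) by ring.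
  apply Rmult_integral_contrapositive_currified; [lra|].
  apply dominant_term_neq0; [exact hsep|].
  pose proof (mul_bounds a a ha ha); pose proof (mul_bounds a b ha hb);
  pose proof (mul_bounds b b hb hb); pose proof (mul_bounds d e hd he);
  pose proof (mul_bounds a d ha hd); pose proof (mul_bounds a e ha he);
  pose proof (mul_bounds b d hb hd); pose proof (mul_bounds b e hb he).
  split; nra.
Qed.

Lemma phi_lower_not_collinear a b c d e :
  1 <= a <= M -> 1 <= b <= M -> 1 <= c <= M -> 1 <= d <= M -> 1 <= e <= M ->
  1 <= Rabs (c + d - a - b) ->
  ~ collinear (phi a b) (phi c d) (phi e F).
Proof.
  intros ha hb hc hd he hsep. unfold collinear, phi; simpl.
  set (D := c + d - a - b) in *.
  set (Qab := a * a + a * b + b * b).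
  set (E := c * c + c * d + d * d - Qab).
  replace (_ - _) with (D * (F * F) + (F * (D * e - E) + D * (e * e - Qab) - E * (e - (a + b))))
    by (unfold D, E, Qab; ring).
  apply dominant_term_neq0; [exact hsep|].
  pose proof (mul_bounds a a ha ha); pose proof (mul_bounds a b ha hb);
  pose proof (mul_bounds b b hb hb); pose proof (mul_bounds c c hc hc);
  pose proof (mul_bounds c d hc hd); pose proof (mul_bounds d d hd hd);
  pose proof (mul_bounds e e he he).
  assert (HD : - (2 * M) <= D <= 2 * M) by (unfold D; lra).
  assert (HE : - (3 * (M * M)) <= E <= 3 * (M * M)) by (unfold E, Qab; lra).
  pose proof (mul_interval D e (2 * M) M HD ltac:(lra)) as HDe.
  pose proof (mul_interval F (D * e - E) F (5 * (M * M)) ltac:(nra) ltac:(lra)) as HFlin.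
  pose proof (mul_interval D (e * e - Qab) (2 * M) (3 * (M * M)) HD ltac:(unfold Qab; lra)) as HDq.
  pose proof (mul_interval E (e - (a + b)) (3 * (M * M)) (2 * M) HE ltac:(lra)) as HEd.
  assert (F * (5 * (M * M)) <= F * F / 4) by nra.
  assert (12 * (M * (M * M)) <= F * F / 4) by nra.
  split; nra.
Qed.

End LargeTop.

Fixpoint xnat (n : nat) : nat :=
  match n with O => 1 | S m => 20 * xnat m * xnat m end%nat.

Definition xr (n : nat) : R := INR (xnat n).

Lemma xr_S n : xr (S n) = 20 * (xr n * xr n).
Proof. unfold xr; cbn [xnat]; rewrite !mult_INR; simpl INR; ring. Qed.

Lemma xr_ge1 n : 1 <= xr n.
Proof. induction n as [|n IH]; [unfold xr; simpl; lra | rewrite xr_S; nra]. Qed.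

Lemma xr_double_lt_S n : 2 * xr n < xr (S n).
Proof. rewrite xr_S; pose proof (xr_ge1 n); nra. Qed.

Lemma xr_double_lt i j : (i < j)%nat -> 2 * xr i < xr j.
Proof.
  induction 1 as [|j _ IH]; [apply xr_double_lt_S|].
  pose proof (xr_double_lt_S j); pose proof (xr_ge1 j); lra.
Qed.

Lemma xr_le i j : (i <= j)%nat -> xr i <= xr j.
Proof.
  intros H; destruct (Nat.eq_dec i j) as [->|]; [lra|].
  pose proof (xr_double_lt i j ltac:(lia)); pose proof (xr_ge1 i); lra.
Qed.

Lemma xr_inj i j : xr i = xr j -> i = j.
Proof.
  intros E; destruct (Nat.lt_total i j) as [h|[h|h]]; auto;
  pose proof (xr_double_lt _ _ h); pose proof (xr_ge1 i); pose proof (xr_ge1 j); lra.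
Qed.

Lemma xr_sum_inj a b c d : (a < b)%nat -> (c < d)%nat ->
  xr a + xr b = xr c + xr d -> a = c /\ b = d.
Proof.
  intros hab hcd E.
  pose proof (xr_double_lt a b hab); pose proof (xr_double_lt c d hcd).
  destruct (Nat.lt_total b d) as [h|[<-|h]].
  - pose proof (xr_double_lt b d h); pose proof (xr_ge1 c); lra.
  - split; [apply xr_inj; lra | reflexivity].
  - pose proof (xr_double_lt d b h); pose proof (xr_ge1 a); lra.
Qed.

Lemma INR_sep m n : m <> n -> 1 <= Rabs (INR m - INR n).
Proof.
  intros H; destruct (Nat.lt_total m n) as [h|[h|h]]; [|contradiction|];
    apply le_INR in h; rewrite S_INR in h.
  - rewrite Rabs_left1; lra.
  - rewrite Rabs_right; lra.
Qed.

Lemma xr_sum_sep a b c d : xr a + xr b <> xr c + xr d -> 1 <= Rabs (xr c + xr d - xr a - xr b).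
Proof.
  intros H.
  replace (xr c + xr d - xr a - xr b) with (INR (xnat c + xnat d) - INR (xnat a + xnat b))
    by (unfold xr; rewrite !plus_INR; ring).
  apply INR_sep; intro E; apply H; unfold xr; rewrite <- !plus_INR, E; reflexivity.
Qed.

Definition pt (e : nat * nat) : point := phi (xr (fst e)) (xr (snd e)).

Lemma pt_inj e e' : (fst e < snd e)%nat -> (fst e' < snd e')%nat -> pt e = pt e' -> e = e'.
Proof.
  destruct e as [a b], e' as [c d]; unfold pt; simpl; intros h h' E.
  injection E as E _. destruct (xr_sum_inj a b c d h h' E) as [-> ->]; reflexivity.
Qed.

Lemma xr_bounds i g : (i <= g)%nat -> 1 <= xr i <= xr g.
Proof. split; [apply xr_ge1 | apply xr_le; assumption]. Qed.

Lemma pt_lower_not_collinear a1 b1 a2 b2 e g :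
  (a1 < b1 <= g)%nat -> (a2 < b2 <= g)%nat -> (e <= g)%nat -> (a1, b1) <> (a2, b2) ->
  ~ collinear (pt (a1, b1)) (pt (a2, b2)) (pt (e, S g)).
Proof.
  intros h1 h2 he hne; unfold pt; simpl.
  apply (phi_lower_not_collinear (xr g)); try apply xr_bounds; try lia.
  - apply xr_ge1.
  - rewrite xr_S; lra.
  - apply xr_sum_sep; intro E; apply hne.
    destruct (xr_sum_inj a1 b1 a2 b2 ltac:(lia) ltac:(lia) E) as [-> ->]; reflexivity.
Qed.

Lemma pt_two_top_not_collinear a b d e g :
  (a < b <= g)%nat -> (d <= g)%nat -> (e <= g)%nat -> d <> e ->
  (d, e) <> (a, b) -> (e, d) <> (a, b) ->
  ~ collinear (pt (a, b)) (pt (d, S g)) (pt (e, S g)).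
Proof.
  intros hab hd he hde n1 n2; unfold pt; simpl.
  apply (phi_two_top_not_collinear (xr g)); try apply xr_bounds; try lia.
  - apply xr_ge1.
  - rewrite xr_S; lra.
  - intro E; apply xr_inj in E; contradiction.
  - apply xr_sum_sep; intro E.
    destruct (Nat.lt_total d e) as [h|[h|h]]; [|contradiction|].
    + destruct (xr_sum_inj a b d e ltac:(lia) h E) as [-> ->]; auto.
    + rewrite (Rplus_comm (xr d)) in E.
      destruct (xr_sum_inj a b e d ltac:(lia) h E) as [-> ->]; auto.
Qed.

Lemma pt_common_top_not_collinear a1 a2 a3 f : a1 <> a2 -> a1 <> a3 -> a2 <> a3 ->
  ~ collinear (pt (a1, f)) (pt (a2, f)) (pt (a3, f)).
Proof.
  intros; unfold pt; simpl.
  apply phi_common_not_collinear; intro E; apply xr_inj in E; contradiction.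
Qed.

Definition crosses (side : nat -> bool) (e : nat * nat) : bool :=
  xorb (side (fst e)) (side (snd e)).

Lemma crosses_triangle side i j k :
  crosses side (i, j) = true -> crosses side (j, k) = true -> crosses side (i, k) = false.
Proof. unfold crosses; simpl; destruct (side i), (side j), (side k); easy. Qed.

Definition cut_edge (side : nat -> bool) (e : nat * nat) : Prop :=
  (fst e < snd e)%nat /\ crosses side e = true.

Lemma cut_edges_not_collinear_top side e1 e2 e3 :
  cut_edge side e1 -> cut_edge side e2 -> cut_edge side e3 ->
  e1 <> e2 -> e1 <> e3 -> e2 <> e3 ->
  (snd e1 <= snd e3)%nat -> (snd e2 <= snd e3)%nat ->
  ~ collinear (pt e1) (pt e2) (pt e3).
Proof.
  destruct e1 as [a1 b1], e2 as [a2 b2], e3 as [a3 b3]; unfold cut_edge; simpl.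
  intros [h1 c1] [h2 c2] [h3 c3] d12 d13 d23 l1 l2.
  destruct b3 as [|g]; [lia|].
  destruct (Nat.eq_dec b1 (S g)) as [->|n1], (Nat.eq_dec b2 (S g)) as [->|n2].
  - apply pt_common_top_not_collinear; congruence.
  - intro H; apply collinear_swap12 in H; revert H.
    apply pt_two_top_not_collinear; try lia; try congruence;
      intros [= -> ->]; rewrite (crosses_triangle side a2 b2 (S g)) in *; congruence.
  - apply pt_two_top_not_collinear; try lia; try congruence;
      intros [= -> ->]; rewrite (crosses_triangle side a1 b1 (S g)) in *; congruence.
  - apply pt_lower_not_collinear; try lia; congruence.
Qed.

Lemma cut_edges_not_collinear side e1 e2 e3 :
  cut_edge side e1 -> cut_edge side e2 -> cut_edge side e3 ->
  e1 <> e2 -> e1 <> e3 -> e2 <> e3 ->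
  ~ collinear (pt e1) (pt e2) (pt e3).
Proof.
  intros c1 c2 c3 d12 d13 d23 H.
  assert (Hmax : (snd e1 <= snd e3 /\ snd e2 <= snd e3)%nat
              \/ (snd e1 <= snd e2 /\ snd e3 <= snd e2)%nat
              \/ (snd e2 <= snd e1 /\ snd e3 <= snd e1)%nat) by lia.
  destruct Hmax as [[]|[[]|[]]].
  - revert H; apply (cut_edges_not_collinear_top side); auto.
  - apply collinear_swap23 in H; revert H.
    apply (cut_edges_not_collinear_top side); auto.
  - apply collinear_swap12, collinear_swap23 in H; revert H.
    apply (cut_edges_not_collinear_top side); auto.
Qed.

Definition unbounded (U : nat -> Prop) : Prop := forall k, exists u, (k <= u)%nat /\ U u.

Lemma unbounded_above U v : unbounded U -> unbounded (fun u => U u /\ (v < u)%nat).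
Proof.
  intros HU k; destruct (HU (Nat.max k (S v))) as [u [Hu Uu]].
  exists u; repeat split; auto; lia.
Qed.

Lemma unbounded_pigeonhole (colors : list nat) (U : nat -> Prop) (c : nat -> nat) :
  unbounded U -> (forall u, U u -> In (c u) colors) ->
  exists k, In k colors /\ unbounded (fun u => U u /\ c u = k).
Proof.
  revert U; induction colors as [|k colors IH]; intros U HU Hc.
  - destruct (HU 0%nat) as [u [_ Uu]]; destruct (Hc u Uu).
  - destruct (classic (unbounded (fun u => U u /\ c u = k))) as [Hk|Hk].
    + exists k; split; [left; reflexivity | exact Hk].
    + apply not_all_ex_not in Hk as [v Hv].
      destruct (IH (fun u => U u /\ (v < u)%nat)) as [k' [Hk' Hunb]].
      * apply unbounded_above, HU.
      * intros u [Uu Hvu]; destruct (Hc u Uu) as [E|]; auto.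
        exfalso; apply Hv; exists u; split; [lia | auto].
      * exists k'; split; [right; exact Hk'|].
        intros m; destruct (Hunb m) as [u [? [[? ?] ?]]]; exists u; auto.
Qed.

Lemma ramsey_triangle (col : nat -> nat -> nat) (colors : list nat) (U : nat -> Prop) :
  unbounded U -> (forall u w, U u -> U w -> (u < w)%nat -> In (col u w) colors) ->
  exists i j k, (i < j < k)%nat /\ col i j = col j k /\ col i j = col i k.
Proof.
  remember (length colors) as n eqn:Hn.
  assert (Hlen : (length colors <= n)%nat) by lia; clear Hn; revert colors U Hlen.
  induction n as [|n IH]; intros colors U Hlen HU Hcol.
  - destruct colors; [|simpl in Hlen; lia].
    destruct (HU 0%nat) as [u [_ Uu]]; destruct (HU (S u)) as [w [Hw Uw]].
    destruct (Hcol u w Uu Uw Hw).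
  - destruct (HU 0%nat) as [v [_ Uv]].
    destruct (unbounded_pigeonhole colors (fun u => U u /\ (v < u)%nat) (col v))
      as [c [Hc Hunb]].
    { apply unbounded_above, HU. }
    { intros u [Uu Hvu]; apply Hcol; auto. }
    destruct (classic (exists u w, U u /\ U w /\ (v < u < w)%nat
                        /\ col v u = c /\ col v w = c /\ col u w = c)) as [Hmono|Hmono].
    + destruct Hmono as [u [w [_ [_ [Hvuw [Hu [Hw Huw]]]]]]].
      exists v, u, w; split; [exact Hvuw | split; congruence].
    + apply (IH (remove Nat.eq_dec c colors) (fun u => (U u /\ (v < u)%nat) /\ col v u = c)).
      * pose proof (remove_length_lt Nat.eq_dec colors c Hc); lia.
      * exact Hunb.
      * intros u w [[Uu Hvu] Hu] [[Uw Hvw] Hw] Huw; apply in_in_remove.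
        -- intro E; apply Hmono; exists u, w; repeat split; assumption.
        -- apply Hcol; auto.
Qed.

Definition cut_size (side : nat -> bool) (E : list (nat * nat)) : nat :=
  length (filter (crosses side) E).

Definition extend (side : nat -> bool) (N : nat) (b : bool) : nat -> bool :=
  fun k => if k =? N then b else side k.

Lemma crosses_extend_below side N b e : (fst e < N)%nat -> (snd e < N)%nat ->
  crosses (extend side N b) e = crosses side e.
Proof.
  intros h1 h2; unfold crosses, extend.
  rewrite (proj2 (Nat.eqb_neq (fst e) N)), (proj2 (Nat.eqb_neq (snd e) N)) by lia.
  reflexivity.
Qed.

Lemma cut_size_extend_top side N E : (forall e, In e E -> (fst e < N)%nat /\ snd e = N) ->
  (cut_size (extend side N true) E + cut_size (extend side N false) E = length E)%nat.
Proof.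
  induction E as [|e E IH]; intros HE; [reflexivity|].
  destruct (HE e (or_introl eq_refl)) as [h1 h2].
  assert (Hb : forall b, crosses (extend side N b) e = xorb (side (fst e)) b).
  { intro b; unfold crosses, extend.
    rewrite h2, Nat.eqb_refl, (proj2 (Nat.eqb_neq (fst e) N)) by lia; reflexivity. }
  unfold cut_size in *; simpl; rewrite !Hb.
  specialize (IH (fun e' He' => HE e' (or_intror He'))).
  destruct (side (fst e)); simpl; lia.
Qed.

Lemma filter_length_split {X} (f p : X -> bool) (l : list X) :
  length (filter f l)
  = (length (filter f (filter p l)) + length (filter f (filter (fun x => negb (p x)) l)))%nat.
Proof. induction l as [|a l IH]; simpl; auto; destruct (p a); simpl; destruct (f a); simpl; lia. Qed.

Lemma max_cut_half N E : (forall e, In e E -> (fst e < snd e < N)%nat) ->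
  exists side, (length E <= 2 * cut_size side E)%nat.
Proof.
  revert E; induction N as [|N IH]; intros E HE.
  - destruct E as [|e E]; [exists (fun _ => true); simpl; lia|].
    specialize (HE e (or_introl eq_refl)); lia.
  - set (below := fun e : nat * nat => snd e <? N).
    set (E1 := filter below E); set (E2 := filter (fun e => negb (below e)) E).
    destruct (IH E1) as [side Hside].
    { intros e He; apply filter_In in He as [He Hb]; apply Nat.ltb_lt in Hb.
      specialize (HE e He); lia. }
    assert (HE2 : forall e, In e E2 -> (fst e < N)%nat /\ snd e = N).
    { intros e He; apply filter_In in He as [He Hb].
      apply Bool.negb_true_iff, Nat.ltb_ge in Hb; specialize (HE e He); lia. }
    assert (Hsplit : forall b, cut_size (extend side N b) E
                               = (cut_size side E1 + cut_size (extend side N b) E2)%nat).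
    { intro b; unfold cut_size; rewrite (filter_length_split _ below E); fold E1 E2.
      f_equal; f_equal; apply filter_ext_in; intros e He.
      apply filter_In in He as [He Hb]; apply Nat.ltb_lt in Hb.
      specialize (HE e He); apply crosses_extend_below; lia. }
    pose proof (cut_size_extend_top side N E2 HE2).
    assert (length E = length E1 + length E2)%nat by (symmetry; apply filter_length).
    destruct (Nat.le_gt_cases (cut_size (extend side N false) E2)
                              (cut_size (extend side N true) E2)).
    + exists (extend side N true); rewrite Hsplit; lia.
    + exists (extend side N false); rewrite Hsplit; lia.
Qed.

Lemma injective_eventually_avoids {T} (g : nat -> T) (l : list T) :
  (forall m n, g m = g n -> m = n) -> exists n, forall m, (n <= m)%nat -> ~ In (g m) l.
Proof.
  intros Hg; induction l as [|y l [n Hn]]; [exists 0%nat; intros m _ []|].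
  destruct (classic (exists m0, g m0 = y)) as [[m0 Hm0]|Hy].
  - exists (Nat.max n (S m0)); intros m Hm [E|Hin].
    + subst y; apply Hg in E; lia.
    + apply (Hn m); [lia | exact Hin].
  - exists n; intros m Hm [E|Hin]; [apply Hy; eauto | exact (Hn m Hm Hin)].
Qed.

Definition edge_points (p : point) : Prop := exists e, (fst e < snd e)%nat /\ p = pt e.

Lemma edge_points_infinite : infinite_set edge_points.
Proof.
  intros l; destruct (injective_eventually_avoids (fun n => pt (0, S n))%nat l) as [n Hn].
  { intros m k E; apply pt_inj in E; simpl; try lia; congruence. }
  exists (pt (0, S n)%nat); split; [exists (0, S n)%nat; simpl; split; [lia | reflexivity]|].
  apply Hn; lia.
Qed.

Lemma edges_of_edge_points (P : list point) : (forall p, In p P -> edge_points p) ->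
  exists E, (forall e, In e E -> (fst e < snd e)%nat) /\ map pt E = P.
Proof.
  induction P as [|p P IH]; intros HP; [exists nil; simpl; tauto|].
  destruct IH as [E [HE <-]]; [intros; apply HP; right; assumption|].
  destruct (HP p (or_introl eq_refl)) as [e [He ->]].
  exists (e :: E); split; [intros e' [<-|He']; auto | reflexivity].
Qed.

Lemma edge_points_half_no_three_collinear (P : list point) :
  NoDup P -> (forall p, In p P -> edge_points p) ->
  exists P', NoDup P' /\ (forall p, In p P' -> In p P) /\
             (length P <= 2 * length P')%nat /\ no_three_collinear (fun p => In p P').
Proof.
  intros Hnd HP; destruct (edges_of_edge_points P HP) as [E [HE <-]].
  destruct (max_cut_half (S (list_max (map snd E))) E) as [side Hside].
  { intros e He; split; [auto|]; apply Nat.lt_succ_r.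
    apply (proj1 (Forall_forall _ _) (proj1 (list_max_le _ _) (le_n _))), in_map, He. }
  assert (Hcut : forall e, In e (filter (crosses side) E) -> cut_edge side e).
  { intros e He; apply filter_In in He as [He Hc]; split; auto. }
  exists (map pt (filter (crosses side) E)); repeat split.
  - apply NoDup_map_NoDup_ForallPairs.
    + intros e e' He He' Eq; apply pt_inj; auto; apply Hcut; assumption.
    + apply NoDup_filter, (NoDup_map_inv pt), Hnd.
  - intros p Hp; apply in_map_iff in Hp as [e [<- He]]; apply filter_In in He.
    apply in_map; tauto.
  - rewrite !length_map; exact Hside.
  - intros p q r Hp Hq Hr Hpq Hqr Hpr.
    apply in_map_iff in Hp as [e1 [<- He1]], Hq as [e2 [<- He2]], Hr as [e3 [<- He3]].
    apply (cut_edges_not_collinear side); auto; intros ->; auto.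
Qed.

Lemma edge_points_not_finitely_colorable :
  ~ (exists (m : nat) (c : point -> nat),
        (forall p, edge_points p -> (c p < m)%nat) /\
        forall i : nat, no_three_collinear (fun p => edge_points p /\ c p = i)).
Proof.
  intros [m [c [Hc Hcol]]].
  destruct (ramsey_triangle (fun i j => c (pt (i, j))) (seq 0 m) (fun _ => True))
    as [i [j [k [Hijk [E1 E2]]]]].
  { intros k; exists k; auto. }
  { intros u w _ _ Huw; apply in_seq; split; [lia|]; apply Hc; exists (u, w); auto. }
  assert (Hedge : forall a b, (a < b)%nat -> edge_points (pt (a, b))).
  { intros a b Hab; exists (a, b); auto. }
  apply (Hcol (c (pt (i, j))) (pt (i, j)) (pt (j, k)) (pt (i, k))).
  - split; [apply Hedge; lia | reflexivity].
  - split; [apply Hedge; lia | auto].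
  - split; [apply Hedge; lia | auto].
  - intros E; apply pt_inj in E; simpl; try lia; injection E; lia.
  - intros E; apply pt_inj in E; simpl; try lia; injection E; lia.
  - intros E; apply pt_inj in E; simpl; try lia; injection E; lia.
  - apply phi_triangle_collinear.
Qed.

Theorem theorem1p1 :
  exists A : point -> Prop,
    infinite_set A /\
    (forall (n : nat) (P : list point),
        (1 <= n)%nat -> NoDup P -> length P = n -> (forall x, In x P -> A x) ->
        exists P' : list point,
          NoDup P' /\ (forall x, In x P' -> In x P) /\
          (n <= 2 * length P')%nat /\
          no_three_collinear (fun x => In x P')) /\
    ~ (exists (m : nat) (c : point -> nat),
          (forall x, A x -> (c x < m)%nat) /\
          forall i : nat, no_three_collinear (fun x => A x /\ c x = i)).
Proof.
  exists edge_points; split; [exact edge_points_infinite | split].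
  - intros n P _ Hnd <- HP; exact (edge_points_half_no_three_collinear P Hnd HP).
  - exact edge_points_not_finitely_colorable.
Qed.
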